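(* Let $G$ be an abelian Hausdorff topological group and $\kappa$ a cardinal. The following are equivalent: (i) $G$ contains a subgroup topologically isomorphic to a direct sum of $\kappa$-many non-trivial topological groups; (ii) $G$ contains a topologically independent absolutely Cauchy summable set of size $\kappa$.
   Context: All groups are abelian; topological groups are Hausdorff. The direct sum $\bigoplus_{i\in I}H_i$ of topological groups is the subgroup of the product $\prod_{i\in I}H_i$ consisting of elements with finitely many non-zero coordinates, equipped with the subspace topology of the Tychonoff product topology. A subset $A\subseteq G$ is absolutely Cauchy summable if for every neighbourhood $U$ of $0$ there is a finite $F\subseteq A$ such that the subgroup $\langle A\setminus F\rangle$ generated by $A\setminus F$ is contained in $U$. A subset $A\subseteq G$ is topologically independent if $0\notin A$ and for every neighbourhood $W$ of $0$ there is a neighbourhood $U$ of $0$ such that for every finite $F\subseteq A$ and all integers $\{z_a:a\in F\}$, $\sum_{a\in F}z_aa\in U$ implies $z_aa\in W$ for all $a\in F$. *)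

From HB Require Import structures.
From mathcomp Require Import all_boot all_order all_algebra.
From mathcomp Require Import all_classical all_reals all_analysis.
Set Implicit Arguments. Unset Strict Implicit. Unset Printing Implicit Defensive.
Import Order.TTheory GRing.Theory Num.Theory.
Local Open Scope classical_set_scope.
Local Open Scope ring_scope.

Definition is_subgroup (G : zmodType) (S : set G) : Prop :=
  S 0 /\ (forall x y, S x -> S y -> S (x - y)).

Definition gen_subgroup (G : zmodType) (S : set G) : set G :=
  [set x | forall K : set G, is_subgroup K -> S `<=` K -> K x].

Definition abs_cauchy_summable (G : topologicalZmodType) (A : set G) : Prop :=
  forall U : set G, nbhs (0 : G) U ->
    exists F : set G, [/\ finite_set F, F `<=` A & gen_subgroup (A `\` F) `<=` U].

(* A is topologically independent in G.  A finite subset F of A is given as a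
   duplicate-free list of elements of A. *)
Definition top_independent (G : topologicalZmodType) (A : set G) : Prop :=
  ~ A 0 /\
  forall W : set G, nbhs (0 : G) W ->
    exists U : set G, nbhs (0 : G) U /\
      forall (F : seq G) (z : G -> int), uniq F -> (forall a, a \in F -> A a) ->
        U (\sum_(a <- F) a *~ z a) -> forall a, a \in F -> W (a *~ z a).

(* The (underlying set of the) direct sum of the family H inside the product
   prod_topology H (Tychonoff topology): elements with finite support. *)
Definition direct_sum_set (I : Type) (H : I -> topologicalZmodType) :
    set (prod_topology (fun i => H i : topologicalType)) :=
  [set x | finite_set [set i | x i != 0]].

(* f restricted to the direct sum D is a topological isomorphism of D (with the
   subspace topology of the product) onto its image f(D) (with the subspace
   topology of G); f(D) is then a subgroup of G topologically isomorphic to the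
   direct sum. *)
Definition top_iso_direct_sum_into (I : Type) (H : I -> topologicalZmodType)
    (G : topologicalZmodType) (f : prod_topology (fun i => H i : topologicalType) -> G) : Prop :=
  let D := @direct_sum_set I H in
  [/\ (forall x y, D x -> D y -> f (fun i => x i + y i) = f x + f y),
      {in D &, injective f},
      {within D, continuous f} &
      (forall x, D x -> forall U, nbhs x U ->
         exists V : set G, nbhs (f x) V /\ (forall y, D y -> V (f y) -> U y))].

Definition contains_direct_sum (I : Type) (H : I -> topologicalZmodType)
    (G : topologicalZmodType) : Prop :=
  exists f : prod_topology (fun i => H i : topologicalType) -> G,
    top_iso_direct_sum_into f.

From HB Require Import structures.
From mathcomp Require Import all_boot all_order all_algebra.
From mathcomp Require Import all_classical all_reals all_analysis.
From mathcomp Require Import finmap.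
Set Implicit Arguments. Unset Strict Implicit. Unset Printing Implicit Defensive.
Import Order.TTheory GRing.Theory Num.Theory.
Local Open Scope classical_set_scope.
Local Open Scope ring_scope.

(* Both directions rest on the same dictionary between a direct sum of
   nontrivial groups H_i and an independent summable family (a_i).
   Given an embedding f of the direct sum, a_i := f(e_i), for e_i a nonzero
   element of H_i placed in coordinate i: continuity of f at 0 makes the a_i
   absolutely Cauchy summable (only finitely many coordinates are constrained
   by a product neighbourhood), and continuity of f^-1 at 0 makes them
   topologically independent.  Conversely, given such a family, take H_i the
   cyclic subgroup <a_i> with the subspace topology and f(x) := sum_i x_i:
   independence and the Hausdorff property make f injective and open onto its
   image, while summability makes it continuous. *)

Section Subgroups.
Context (G : zmodType).
Implicit Types (S K : set G).

Lemma subgroup0 K : is_subgroup K -> K 0. Proof. by case. Qed.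

Lemma subgroupB K x y : is_subgroup K -> K x -> K y -> K (x - y).
Proof. by case=> _; apply. Qed.

Lemma subgroupN K x : is_subgroup K -> K x -> K (- x).
Proof. by move=> hK Kx; rewrite -sub0r; apply: subgroupB => //; exact: subgroup0. Qed.

Lemma subgroupD K x y : is_subgroup K -> K x -> K y -> K (x + y).
Proof. by move=> hK Kx Ky; rewrite -[y]opprK; apply: subgroupB => //; exact: subgroupN. Qed.

Lemma subgroup_sum K (J : eqType) (r : seq J) (F : J -> G) : is_subgroup K ->
  (forall i, i \in r -> K (F i)) -> K (\sum_(i <- r) F i).
Proof.
move=> hK; elim: r => [|i r IH] Kr; first by rewrite big_nil; exact: subgroup0.
rewrite big_cons; apply: subgroupD => //; first by apply: Kr; rewrite mem_head.
by apply: IH => j jr; apply: Kr; rewrite inE jr orbT.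
Qed.

Lemma gen_subgroup_subgroup S : is_subgroup (gen_subgroup S).
Proof.
split; first by move=> K hK _; exact: subgroup0.
by move=> x y Sx Sy K hK SK; apply: subgroupB => //; [exact: Sx | exact: Sy].
Qed.

Lemma sub_gen_subgroup S : S `<=` gen_subgroup S.
Proof. by move=> x Sx K _; apply. Qed.

Lemma gen_subgroup_min S K : is_subgroup K -> S `<=` K -> gen_subgroup S `<=` K.
Proof. by move=> hK SK x; apply. Qed.

Lemma gen_subgroupS S K : S `<=` K -> gen_subgroup S `<=` gen_subgroup K.
Proof. by move=> SK x Sx K' hK' KK'; apply: Sx => //; apply: subset_trans KK'. Qed.

Lemma gen_subgroup1 (a x : G) : gen_subgroup [set a] x -> exists n : int, x = a *~ n.
Proof.
move=> ax; suff : [set y | exists n : int, y = a *~ n] x by [].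
apply: (gen_subgroup_min _ _ ax) => [|_ ->]; last by exists 1; rewrite mulr1z.
split; first by exists 0; rewrite mulr0z.
by move=> _ _ [n ->] [m ->]; exists (n - m); rewrite mulrzBr.
Qed.

End Subgroups.

Section TopologicalZmodule.
Context (M : topologicalZmodType).

Lemma nbhs_addl (p q : M) W : nbhs (p + q) W -> nbhs q [set g | W (p + g)].
Proof.
move=> Wpq; apply: (@continuous_comp _ _ _ (fun g : M => (p, g)) (fun x : M * M => x.1 + x.2));
  last exact: Wpq.
  by apply: cvg_pair; [exact: cvg_cst | exact: cvg_id].
exact: add_continuous.
Qed.

Lemma nbhs0_addl (p : M) W : nbhs p W -> nbhs 0 [set g | W (p + g)].
Proof. by move=> Wp; apply: nbhs_addl; rewrite addr0. Qed.

Lemma nbhs_subr0 (p : M) W : nbhs 0 W -> nbhs p [set g | W (g - p)].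
Proof.
move=> W0; have := @nbhs_addl (- p) p W; rewrite addNr => /(_ W0).
by apply: filterS => g /=; rewrite addrC.
Qed.

Lemma nbhs0_split_add W : nbhs (0 : M) W -> exists V1 V2,
  [/\ nbhs (0 : M) V1, nbhs (0 : M) V2 & forall u v, V1 u -> V2 v -> W (u + v)].
Proof.
move=> W0; have := @add_continuous M (0, 0) W; rewrite /= addr0 => /(_ W0).
move=> [[V1 V2] /= [V10 V20] V12W]; exists V1, V2; split => // u v V1u V2v.
exact: (V12W (u, v)).
Qed.

Lemma nbhs0_split_sum (m : nat) W : nbhs (0 : M) W -> exists V, nbhs (0 : M) V /\
  forall s : seq M, (size s <= m)%N -> (forall g, g \in s -> V g) -> W (\sum_(g <- s) g).
Proof.
elim: m W => [|m IH] W W0.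
  exists W; split => // -[|//] _ _; rewrite big_nil; exact: nbhs_singleton.
have [V1 [V2 [V10 V20 V12W]]] := nbhs0_split_add W0.
have [V [V0 VV2]] := IH V2 V20.
exists (V1 `&` V); split; first exact: filterI.
case=> [|g s] sm Vs; first by rewrite big_nil; exact: nbhs_singleton.
rewrite big_cons; apply: V12W; first by case: (Vs g (mem_head _ _)).
by apply: VV2 => // h hs; case: (Vs h); rewrite // inE hs orbT.
Qed.

Lemma hausdorff_nbhs0_eq0 (g : M) : hausdorff_space M ->
  (forall W, nbhs (0 : M) W -> W g) -> g = 0.
Proof. by move=> hM g0; apply: hM => A B Ag B0; exists g; split; [exact: nbhs_singleton | exact: g0]. Qed.

End TopologicalZmodule.

Lemma within_continuousP (T U : topologicalType) (D : set T) (f : T -> U) :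
  {within D, continuous f} <->
  forall x, D x -> forall W, nbhs (f x) W -> nbhs x [set y | D y -> W (f y)].
Proof.
rewrite continuous_subspace_in; split => fc x.
  move=> Dx W Wfx; have fxW := fc x (mem_set Dx) W Wfx.
  have : within D (nbhs x) (f @^-1` W) by rewrite (nbhs_subspace_in Dx); exact: fxW.
  by [].
move=> /set_mem Dx W Wfx; have fxW : within D (nbhs x) (f @^-1` W) by exact: fc.
by rewrite (nbhs_subspace_in Dx) in fxW.
Qed.

(* Indexed by the subgroup proof, which the zmodule instance below needs. *)
Definition subgroup_type (G : topologicalZmodType) (S : set G) (hS : is_subgroup S) :=
  set_type S.

Section SubgroupType.
Context (G : topologicalZmodType) (S : set G) (hS : is_subgroup S).
Local Notation T := (subgroup_type hS).

HB.instance Definition _ := Choice.on T.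
HB.instance Definition _ := Topological.copy T (set_type S).

Definition subgroup_zero : T := exist _ 0 (mem_set (subgroup0 hS)).
Definition subgroup_add (x y : T) : T :=
  exist _ (val x + val y) (mem_set (subgroupD hS (set_valP x) (set_valP y))).
Definition subgroup_opp (x : T) : T :=
  exist _ (- val x) (mem_set (subgroupN hS (set_valP x))).

Lemma subgroup_addA : associative subgroup_add.
Proof. by move=> x y z; apply: val_inj; rewrite /= addrA. Qed.
Lemma subgroup_addC : commutative subgroup_add.
Proof. by move=> x y; apply: val_inj; rewrite /= addrC. Qed.
Lemma subgroup_add0 : left_id subgroup_zero subgroup_add.
Proof. by move=> x; apply: val_inj; rewrite /= add0r. Qed.
Lemma subgroup_addN : left_inverse subgroup_zero subgroup_opp subgroup_add.
Proof. by move=> x; apply: val_inj; rewrite /= addNr. Qed.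

HB.instance Definition _ :=
  GRing.isZmodule.Build T subgroup_addA subgroup_addC subgroup_add0 subgroup_addN.

Let val_continuous : continuous (set_val : T -> G).
Proof. exact: (@initial_continuous _ _ (set_val : set_type S -> G)). Qed.

Lemma subgroup_sub_continuous : continuous (fun x : T * T => x.1 - x.2).
Proof.
apply: (@continuous_comp_initial _ (T * T)%type G (set_val : set_type S -> G)).
have -> : set_val \o (fun x : T * T => x.1 - x.2) =
    (fun x : G * G => x.1 - x.2) \o (fun x : T * T => (val x.1, val x.2)).
  by apply: funext.
move=> x; apply: continuous_comp; last exact: sub_continuous.
apply: cvg_pair.
  by apply: (@continuous_comp _ _ _ fst set_val); [exact: cvg_fst | exact: val_continuous].
by apply: (@continuous_comp _ _ _ snd set_val); [exact: cvg_snd | exact: val_continuous].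
Qed.

HB.instance Definition _ :=
  PreTopologicalNmodule_isTopologicalZmodule.Build T subgroup_sub_continuous.

Lemma nbhs_subgroup_preimage (u : T) W : nbhs (val u) W -> nbhs u [set v : T | W (val v)].
Proof. by move=> Wu; apply: val_continuous. Qed.

Lemma nbhs_subgroup_trace (u : T) (N : set T) : nbhs u N ->
  exists W, nbhs (val u) W /\ (forall v : T, W (val v) -> N v).
Proof.
rewrite (@nbhsE (initial_topology (set_val : set_type S -> G))) => -[B [oB Bu] BN].
case: oB => O oO OB; exists O; split; last by move=> v Ov; apply: BN; rewrite -OB.
by apply: open_nbhs_nbhs; split => //; rewrite -OB in Bu.
Qed.

End SubgroupType.

Section ProductBoxes.
Context (I : choiceType) (K : I -> topologicalType).

Definition box (J : {fset I}) (P : forall i, set (K i)) : set (prod_topology K) :=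
  [set y | forall i, i \in J -> P i (y i)].

Lemma box_nbhs (x : prod_topology K) J P :
  (forall i, i \in J -> nbhs (x i) (P i)) -> nbhs x (box J P).
Proof.
move=> Px; have -> : box J P =
    \bigcap_(i in [set i | i \in J]) [set y : prod_topology K | P i (y i)].
  by apply/seteqP; split => y Py i; apply: Py.
by apply: filter_bigI => i iJ; apply: (@proj_continuous I K i x); exact: Px.
Qed.

Definition box_filter_of (x : prod_topology K) : set_system (prod_topology K) :=
  [set U | exists J P, (forall i, nbhs (x i) (P i)) /\ box J P `<=` U].

Instance box_filter_of_filter x : Filter (box_filter_of x).
Proof.
constructor.
- by exists fset0, (fun i => setT); split => // i; exact: filterT.
- move=> U V [J1 [P1 [P1x S1]]] [J2 [P2 [P2x S2]]].
  exists (J1 `|` J2)%fset, (fun i => P1 i `&` P2 i); split; first by move=> i; exact: filterI.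
  move=> y Py; split.
    by apply: S1 => i iJ; case: (Py i _) => //; rewrite inE iJ.
  by apply: S2 => i iJ; case: (Py i _) => //; rewrite inE iJ orbT.
- by move=> U V UV [J [P [Px S]]]; exists J, P; split => //; exact: subset_trans UV.
Qed.

(* The product topology is the supremum of the initial topologies of the
   projections, so it suffices that boxes converge for each of them. *)
Lemma nbhs_box (x : prod_topology K) U : nbhs x U ->
  exists J P, (forall i, nbhs (x i) (P i)) /\ box J P `<=` U.
Proof.
suff : box_filter_of x --> (x : product_topology_def K) by move=> /(_ U).
apply/cvg_sup => i A.
rewrite (@nbhsE (initial_topology (fun f : (forall i, K i) => f i))).
case=> B [oB Ox] OA; case: oB => O oO OB; subst B.
exists [fset i]%fset, (fun j => [set t : K j | O (dfwith x j t i)]); split.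
  move=> j; case: (eqVneq j i) => [->|ji].
    have -> : [set t | O (dfwith x i t i)] = O by apply/seteqP; split => t /=; rewrite dfwithin.
    exact: open_nbhs_nbhs.
  have -> : [set t | O (dfwith x j t i)] = setT.
    by apply/seteqP; split => t //= _; rewrite dfwithout // eq_sym.
  exact: filterT.
by move=> y Oy; apply: OA => /=; have := Oy i (fset11 i); rewrite /= dfwithin.
Qed.

End ProductBoxes.

Section DirectSumAlgebra.
Context (I : Type) (H : I -> topologicalZmodType).
Local Notation PT := (prod_topology (fun i => H i : topologicalType)).
Local Notation D := (@direct_sum_set I H).

Definition pzero : PT := fun i => 0.
Definition padd (x y : PT) : PT := fun i => x i + y i.
Definition popp (x : PT) : PT := fun i => - x i.
Definition pmulz (x : PT) (n : int) : PT := fun i => x i *~ n.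

Lemma direct_sum0 : D pzero.
Proof.
rewrite /direct_sum_set /=.
have -> : [set i | pzero i != 0] = set0 by apply/seteqP; split => i //=; rewrite eqxx.
exact: finite_set0.
Qed.

Lemma direct_sumD x y : D x -> D y -> D (padd x y).
Proof.
move=> Dx Dy; apply: (@sub_finite_set _ _ ([set i | x i != 0] `|` [set i | y i != 0])).
  move=> i /=; rewrite /padd; case: (eqVneq (x i) 0) => [->|]; last by left.
  by rewrite add0r; right.
by rewrite finite_setU.
Qed.

Lemma direct_sumN x : D x -> D (popp x).
Proof. by move=> Dx; apply: (sub_finite_set _ Dx) => i /=; rewrite /popp oppr_eq0. Qed.

Lemma direct_sumMz x n : D x -> D (pmulz x n).
Proof.
move=> Dx; apply: (sub_finite_set _ Dx) => i /=; rewrite /pmulz.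
by case: (eqVneq (x i) 0) => [->|//]; rewrite mul0rz eqxx.
Qed.

Context (G : zmodType) (f : PT -> G).
Hypothesis fD : forall x y, D x -> D y -> f (padd x y) = f x + f y.

Lemma additive_direct_sum0 : f pzero = 0.
Proof.
have := fD direct_sum0 direct_sum0; have -> : padd pzero pzero = pzero.
  by apply: functional_extensionality_dep => i; rewrite /padd addr0.
by move=> /(congr1 (fun g => g - f pzero)); rewrite subrr addrK.
Qed.

Lemma additive_direct_sumN x : D x -> f (popp x) = - f x.
Proof.
move=> Dx; have := fD (direct_sumN Dx) Dx; have -> : padd (popp x) x = pzero.
  by apply: functional_extensionality_dep => i; rewrite /padd /popp addNr.
by rewrite additive_direct_sum0 => /esym/eqP; rewrite addr_eq0 => /eqP.
Qed.

Lemma additive_direct_sumB x y : D x -> D y -> f (padd x (popp y)) = f x - f y.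
Proof. by move=> Dx Dy; rewrite fD ?additive_direct_sumN //; exact: direct_sumN. Qed.

Lemma additive_direct_sumMz x n : D x -> f (pmulz x n) = f x *~ n.
Proof.
move=> Dx; have fMn (k : nat) : f (pmulz x k) = f x *+ k.
  elim: k => [|k IH].
    have -> : pmulz x 0 = pzero.
      by apply: functional_extensionality_dep => i; rewrite /pmulz mulr0z.
    by rewrite additive_direct_sum0 mulr0n.
  have -> : pmulz x k.+1 = padd x (pmulz x k).
    by apply: functional_extensionality_dep => i; rewrite /pmulz /padd -!pmulrn mulrS.
  by rewrite fD ?IH ?mulrS //; exact: direct_sumMz.
case: n => k; first by rewrite fMn -pmulrn.
have -> : pmulz x (Negz k) = popp (pmulz x k.+1).
  by apply: functional_extensionality_dep => i; rewrite /pmulz /popp NegzE mulrNz.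
by rewrite additive_direct_sumN ?fMn ?NegzE ?mulrNz ?pmulrn //; exact: direct_sumMz.
Qed.

End DirectSumAlgebra.
Arguments pzero {I H}.

Section DirectSumToIndependentSet.
Context (G : topologicalZmodType) (I : choiceType) (H : I -> topologicalZmodType).
Local Notation PT := (prod_topology (fun i => H i : topologicalType)).
Local Notation D := (@direct_sum_set I H).
Context (f : PT -> G) (hf : top_iso_direct_sum_into f).
Context (h : forall i, H i) (h_neq0 : forall i, h i != 0).

Let fD : forall x y, D x -> D y -> f (padd x y) = f x + f y.
Proof. by case: hf. Qed.
Let f_inj : {in D &, injective f}.
Proof. by case: hf. Qed.

Let e (i : I) : PT := dfwith pzero i (h i).
Let a (i : I) : G := f (e i).

Let e_eq i : e i i = h i. Proof. by rewrite /e dfwithin. Qed.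
Let e_neq i j : j != i -> e i j = 0. Proof. by move=> ji; rewrite /e dfwithout // eq_sym. Qed.

Let De i : D (e i).
Proof.
apply: (@sub_finite_set _ _ [set i]); last exact: finite_set1.
by move=> j /=; case: (eqVneq j i) => [->//|/e_neq ->]; rewrite eqxx.
Qed.

Let comb (r : seq I) (n : I -> int) : PT :=
  fun j => h j *~ (if j \in r then n j else 0).

Let comb_image r n : uniq r -> D (comb r n) /\ f (comb r n) = \sum_(i <- r) a i *~ n i.
Proof.
elim: r => [|i r IH] /=.
  have -> : comb [::] n = pzero.
    by apply: functional_extensionality_dep => j; rewrite /comb mulr0z.
  by rewrite big_nil additive_direct_sum0 //; split => //; exact: direct_sum0.
move=> /andP[ir ur]; have [Dr fr] := IH ur.
have -> : comb (i :: r) n = padd (pmulz (e i) (n i)) (comb r n).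
  apply: functional_extensionality_dep => j; rewrite /comb /padd /pmulz inE.
  case: (eqVneq j i) => [->|ji] /=; first by rewrite e_eq (negbTE ir) mulr0z addr0.
  by rewrite e_neq // mul0rz add0r.
have Dni := direct_sumMz (n i) (De i).
by split; [exact: direct_sumD | rewrite fD // fr additive_direct_sumMz // big_cons].
Qed.

Lemma unit_image_inj : injective a.
Proof.
move=> i j aij; apply: contra_eq (h_neq0 i) => ij.
have := f_inj (mem_set (De i)) (mem_set (De j)) aij => /(congr1 (fun x => x i)).
by rewrite e_eq (e_neq ij) => ->; rewrite eqxx.
Qed.

Lemma unit_image_neq0 : ~ (range a) 0.
Proof.
case=> i _ ai0; have : e i = pzero.
  by apply: f_inj; [exact/mem_set/De | exact/mem_set/direct_sum0 | rewrite additive_direct_sum0].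
by move=> /(congr1 (fun x => x i)); rewrite e_eq => hi0; move: (h_neq0 i); rewrite hi0 eqxx.
Qed.

Lemma nbhs0_box_preimage W : nbhs (0 : G) W -> exists (J : {fset I}) (P : forall i, set (H i)),
  (forall i, nbhs (0 : H i) (P i)) /\ forall y, D y -> box J P y -> W (f y).
Proof.
move=> W0; case: hf => _ _ fc _.
have := (within_continuousP _ _).1 fc pzero (@direct_sum0 I H) W.
rewrite additive_direct_sum0 // => /(_ W0) /nbhs_box [J [P [P0 PW]]].
by exists J, P; split => // y Dy /PW; apply.
Qed.

Lemma box_image_nbhs0 J (P : forall i, set (H i)) : (forall i, nbhs (0 : H i) (P i)) ->
  exists V, nbhs (0 : G) V /\ forall y, D y -> V (f y) -> box J P y.
Proof.
move=> P0; case: hf => _ _ _ fo.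
have := fo pzero (@direct_sum0 I H) (box J P) (box_nbhs (fun i _ => P0 i)).
by rewrite additive_direct_sum0 // => -[V [V0 VP]]; exists V.
Qed.

Lemma unit_image_top_independent : top_independent (range a).
Proof.
split; first exact: unit_image_neq0.
move=> W W0; have [J [P [P0 PW]]] := nbhs0_box_preimage W0.
have [V [V0 VP]] := box_image_nbhs0 J P0.
exists V; split => // F z uF FA.
have [r Fr] : exists r : seq I, F = map a r.
  elim: F FA {uF} => [|g' F IH] FA; first by exists [::].
  have [|r ->] := IH; first by move=> x xF; apply: FA; rewrite inE xF orbT.
  by have [i _ <-] := FA g' (mem_head _ _); exists (i :: r).
subst F; move: uF; rewrite big_map => /map_uniq ur VF _ /mapP [i ir ->].
have [Dz fz] := comb_image (fun i => z (a i)) ur.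
have Pz := VP _ Dz; rewrite fz in Pz; have {}Pz := Pz VF.
rewrite -additive_direct_sumMz //; apply: PW; first exact: direct_sumMz.
move=> j; rewrite /pmulz; case: (eqVneq j i) => [->|ji] jJ.
  by rewrite e_eq; have := Pz i jJ; rewrite /comb ir.
by rewrite e_neq // mul0rz; exact: nbhs_singleton (P0 j).
Qed.

(* The subgroup generated by the a_i with i outside J consists of images of
   direct-sum elements vanishing on J. *)
Lemma unit_image_abs_cauchy_summable : abs_cauchy_summable (range a).
Proof.
move=> W W0; have [J [P [P0 PW]]] := nbhs0_box_preimage W0.
exists (a @` [set` J]); split.
- exact/finite_image/finite_fset.
- by move=> g [i _ <-]; exists i.
set K := [set g | exists y, [/\ D y, (forall j, j \in J -> y j = 0) & g = f y]].
have hK : is_subgroup K.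
  split; first by exists pzero; split; rewrite ?additive_direct_sum0 //; exact: direct_sum0.
  move=> _ _ [y1 [D1 J1 ->]] [y2 [D2 J2 ->]]; exists (padd y1 (popp y2)); split.
  + by apply: direct_sumD => //; exact: direct_sumN.
  + by move=> j jJ; rewrite /padd /popp J1 // J2 // subr0.
  + by rewrite additive_direct_sumB.
have sK : gen_subgroup (range a `\` a @` [set` J]) `<=` K.
  apply: gen_subgroup_min hK _ => _ [[i _ <-] iJ]; exists (e i); split => //.
  by move=> j jJ; apply: e_neq; apply: contra_notN iJ => /eqP <-; exists j.
move=> g /sK [y [Dy yJ ->]]; apply: PW Dy _ => j jJ.
by rewrite yJ //; exact: nbhs_singleton (P0 j).
Qed.

Lemma direct_sum_independent_set : exists A : set G,
  [/\ top_independent A, abs_cauchy_summable A & (A #= [set: I])%card].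
Proof.
exists (range a); split.
- exact: unit_image_top_independent.
- exact: unit_image_abs_cauchy_summable.
- exact: inj_card_eq (in2W unit_image_inj).
Qed.

End DirectSumToIndependentSet.

Section IndependentSetToDirectSum.
Context (G : topologicalZmodType) (I : choiceType) (hG : hausdorff_space G).
Context (A : set G) (A_ind : top_independent A) (A_summable : abs_cauchy_summable A).
Context (a : I -> G) (a_inj : injective a) (a_A : forall i, A (a i)).

Definition cyclic_subgroup (i : I) : topologicalZmodType :=
  subgroup_type (gen_subgroup_subgroup [set a i]).
Local Notation C := cyclic_subgroup.
Local Notation PT := (prod_topology (fun i => C i : topologicalType)).
Local Notation D := (@direct_sum_set I C).

Definition sum_coords (x : PT) : G := \sum_(i \in [set i | x i != 0]) val (x i).

Lemma sum_coordsE (x : PT) (r : seq I) : uniq r -> (forall i, x i != 0 -> i \in r) ->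
  sum_coords x = \sum_(i <- r) val (x i).
Proof.
move=> ur xr; rewrite /sum_coords (fsbig_fwiden r) //.
by move=> i [_ /= /negP]; rewrite negbK => /eqP ->.
Qed.

Lemma cyclic_coords (x : PT) : exists n : I -> int, forall i, val (x i) = a i *~ n i.
Proof.
have xn i : exists n : int, val (x i) = a i *~ n by apply: gen_subgroup1; exact: set_valP.
by have [n nE] := choice xn; exists n.
Qed.

Lemma top_independent_family W : nbhs (0 : G) W -> exists U, nbhs (0 : G) U /\
  forall r (n : I -> int), uniq r -> U (\sum_(i <- r) a i *~ n i) ->
    forall i, i \in r -> W (a i *~ n i).
Proof.
move=> W0; have [U [U0 UW]] := A_ind.2 W W0.
exists U; split => // r n ur Ur i ir.
pose z g := n (nth i r (index g (map a r))).
have zE j : j \in r -> z (a j) = n j by move=> jr; rewrite /z (index_map a_inj) nth_index.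
have := UW (map a r) z _ _ _ (a i) (map_f a ir); rewrite zE //; apply.
- by rewrite map_inj_uniq.
- by move=> g /mapP [j _ ->].
- by rewrite big_map (eq_big_seq (fun j => a j *~ n j)) // => j /zE ->.
Qed.

Lemma independent_sum_eq0 r (n : I -> int) : uniq r -> \sum_(i <- r) a i *~ n i = 0 ->
  forall i, i \in r -> a i *~ n i = 0.
Proof.
move=> ur s0 i ir; apply: hausdorff_nbhs0_eq0 hG _ => W W0.
have [U [U0 UW]] := top_independent_family W0; apply: UW ur _ i ir.
by rewrite s0; exact: nbhs_singleton.
Qed.

Lemma sum_coordsB (x y : PT) (J : {fset I}) : D x -> D y -> exists r : seq I,
  [/\ uniq r, (forall i, i \in J -> i \in r), (forall i, i \notin r -> x i = 0 /\ y i = 0) &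
      sum_coords y - sum_coords x = \sum_(i <- r) val (y i - x i)].
Proof.
move=> Dx Dy; pose X := [set i | x i != 0] `|` [set i | y i != 0] `|` [set` J].
have finX : finite_set X by rewrite !finite_setU; split; [split | exact: finite_fset].
have inX i : X i -> i \in fset_set X by move=> Xi; rewrite in_fset_set //; exact: mem_set.
exists (fset_set X); split; first exact: fset_uniq.
- by move=> i iJ; apply: inX; right.
- move=> i; rewrite in_fset_set // notin_setE /X /= => /not_orP [/not_orP [xi yi] _].
  by split; [move/negP: xi | move/negP: yi]; rewrite negbK => /eqP.
have xX i : x i != 0 -> i \in fset_set X by move=> xi; apply: inX; left; left.
have yX i : y i != 0 -> i \in fset_set X by move=> yi; apply: inX; left; right.
by rewrite (sum_coordsE (fset_uniq _) xX) (sum_coordsE (fset_uniq _) yX) -sumrB.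
Qed.

Lemma sum_coordsD (x y : PT) : D x -> D y -> sum_coords (padd x y) = sum_coords x + sum_coords y.
Proof.
move=> Dx Dy; have [r [ur _ out _]] := sum_coordsB fset0 Dx Dy.
have xr i : x i != 0 -> i \in r by apply: contraR => /out [-> _].
have yr i : y i != 0 -> i \in r by apply: contraR => /out [_ ->].
have xyr i : padd x y i != 0 -> i \in r.
  by apply: contraR => /out [xi yi]; rewrite /padd xi yi addr0.
by rewrite !(sum_coordsE ur) // -big_split.
Qed.

Lemma sum_coords_inj : {in D &, injective sum_coords}.
Proof.
move=> x y /set_mem Dx /set_mem Dy xy.
have [r [ur _ out sE]] := sum_coordsB fset0 Dx Dy.
have [n nE] := cyclic_coords (padd y (popp x)).
move: sE; rewrite xy subrr (eq_bigr (fun i => a i *~ n i)); last by move=> j _; exact: nE.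
move=> /esym/independent_sum_eq0 -/(_ ur) n0.
apply: functional_extensionality_dep => i.
have [ir|/out [-> ->] //] := boolP (i \in r).
by apply/esym/subr0_eq/val_inj; rewrite /= -/(val _) [LHS]nE n0.
Qed.

(* Only the finitely many coordinates i with a_i in F need to be controlled:
   the remaining part of f(y) - f(x) lies in the subgroup generated by A \ F. *)
Lemma sum_coords_continuous : {within D, continuous sum_coords}.
Proof.
apply/within_continuousP => x Dx W Wx.
have [V1 [V2 [V10 V20 V12W]]] := nbhs0_split_add (nbhs0_addl Wx).
have [F [finF FA FV]] := A_summable (filterI V10 V20).
pose X := [set i | F (a i)].
have finX : finite_set X.
  rewrite -(eq_finite_set (inj_card_eq (in2W a_inj) : (a @` X #= X)%card)).
  by apply: sub_finite_set finF => _ [i Xi <-].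
pose J := fset_set X.
have [U [U0 UV1]] := nbhs0_split_sum (size J) V10.
pose P i := [set t : C i | U (val t - val (x i))].
have Px i : i \in J -> nbhs (x i) (P i).
  by move=> _; apply: filterS (nbhs_subgroup_preimage (nbhs_subr0 (val (x i)) U0)).
apply: filterS (box_nbhs Px) => y Py Dy /=.
suff : W (sum_coords x + (sum_coords y - sum_coords x)) by rewrite addrC subrK.
have [r [ur Jr _ ->]] := sum_coordsB J Dx Dy.
rewrite (bigID (fun i => i \in J)) /=; apply: V12W.
  have := UV1 [seq val (y i - x i) | i <- [seq i <- r | i \in J]].
  rewrite big_map big_filter; apply.
    rewrite size_map; apply: uniq_leq_size; first exact: filter_uniq.
    by move=> i; rewrite mem_filter => /andP[].
  by move=> g /mapP [i]; rewrite mem_filter => /andP [iJ _] ->; exact: Py i iJ.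
suff /FV [] : gen_subgroup (A `\` F) (\sum_(i <- r | i \notin J) val (y i - x i)) by [].
rewrite -big_filter; apply: subgroup_sum (gen_subgroup_subgroup _) _ => i.
rewrite mem_filter => /andP [iJ _]; apply: (gen_subgroupS _ (set_valP (y i - x i))).
move=> _ ->; split => // Fai; move/negP: iJ; apply; rewrite in_fset_set //; exact: mem_set.
Qed.

Lemma sum_coords_open (x : PT) : D x -> forall U, nbhs x U ->
  exists V : set G, nbhs (sum_coords x) V /\ (forall y, D y -> V (sum_coords y) -> U y).
Proof.
move=> Dx U /nbhs_box [J [P [Px PU]]].
have [W WP] := choice (fun i => nbhs_subgroup_trace (Px i)).
pose W0 := \bigcap_(i in [set i | i \in J]) [set g | W i (val (x i) + g)].
have W00 : nbhs (0 : G) W0 by apply: filter_bigI => i _; exact/nbhs0_addl/(WP i).1.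
have [V [V0 VW]] := top_independent_family W00.
exists [set g | V (g - sum_coords x)]; split; first exact: nbhs_subr0.
move=> y Dy /= Vy; apply: PU => i iJ.
have [r [ur Jr _ sE]] := sum_coordsB J Dx Dy.
have [n nE] := cyclic_coords (padd y (popp x)).
move: Vy; rewrite sE (eq_bigr (fun i => a i *~ n i)); last by move=> j _; exact: nE.
move=> /(VW r n ur)/(_ i (Jr i iJ)); rewrite -nE => /(_ i iJ) /=.
by rewrite addrC subrK => /(WP i).2.
Qed.

Lemma independent_set_direct_sum : exists H : I -> topologicalZmodType,
  (forall i, exists h : H i, h != 0) /\ contains_direct_sum H G.
Proof.
exists C; split.
  move=> i; exists (exist _ (a i) (mem_set (sub_gen_subgroup (erefl (a i)))) : C i).
  by apply/eqP => /(congr1 val) /= ai0; apply: A_ind.1; rewrite -ai0.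
exists sum_coords; split.
- exact: sum_coordsD.
- exact: sum_coords_inj.
- exact: sum_coords_continuous.
- exact: sum_coords_open.
Qed.

End IndependentSetToDirectSum.

Lemma direct_sum_iff_independent_set (G : topologicalZmodType) (I : choiceType) :
  hausdorff_space G ->
  ((exists H : I -> topologicalZmodType,
      (forall i, exists h : H i, h != 0) /\ contains_direct_sum H G)
   <->
   (exists A : set G,
      [/\ top_independent A, abs_cauchy_summable A & (A #= [set: I])%card])).
Proof.
move=> hG; split.
  move=> [H [Hnz [f hf]]]; pose h i : H i := proj1_sig (cid (Hnz i)).
  have h_neq0 i : h i != 0 := proj2_sig (cid (Hnz i)).
  exact (direct_sum_independent_set hf h_neq0).
move=> [A [A_ind A_summable /card_esym/card_bijP [g g_bij]]].
pose a i : G := val (g (exist _ i (in_setT i))).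
have a_inj : injective a.
  by move=> i j /val_inj /(bij_inj g_bij) /(congr1 val).
have a_A i : A (a i) by exact: set_valP.
exact: (independent_set_direct_sum hG A_ind A_summable a_inj a_A).
Qed.

Unset Implicit Arguments.
Theorem corollary5p2 (G : topologicalZmodType) (I : Type) :
  hausdorff_space G ->
  ((exists H : I -> topologicalZmodType,
      (forall i, exists h : H i, h != 0) /\ contains_direct_sum H G)
   <->
   (exists A : set G,
      [/\ top_independent A, abs_cauchy_summable A & (A #= [set: I])%card])).
Proof. exact: (@direct_sum_iff_independent_set G {classic I}). Qed.
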